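(* Let $H$ be $d^4/dx^4$ in $L_2(\mathbb{R}_+)$ with boundary conditions $u''(0)=\alpha u(0)+\alpha_1u'(0)$, $u'''(0)=-\alpha_2u(0)-\bar\alpha u'(0)$ ($\alpha\in\mathbb{C}$, $\alpha_1,\alpha_2\in\mathbb{R}$). The functions $s(\lambda)=\overline{\Omega(k)}/\Omega(k)$ and $b(\lambda)=(\alpha_0+2i\operatorname{Im}\alpha\,k^2+k^4)/\Omega(k)$, $k=\lambda^{1/4}$, are infinitely differentiable for all $\lambda>0$ (being extended by continuity at a positive eigenvalue of $H$, if there is one). If $\lambda_0$ is a positive eigenvalue of $H$, then $$s(\lambda_0)=\frac{\alpha+i\sqrt{\lambda_0}}{\alpha-i\sqrt{\lambda_0}},\qquad b(\lambda_0)=-\frac{2\sqrt{\lambda_0}}{\alpha-i\sqrt{\lambda_0}}.$$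
   Context: $\alpha_0=\alpha_1\alpha_2-|\alpha|^2$, $\Omega(\zeta)=\alpha_0+(1-i)\alpha_2\zeta+2i\operatorname{Re}\alpha\,\zeta^2-(1+i)\alpha_1\zeta^3-\zeta^4$. $H$ acts as $u\mapsto u^{(4)}$ on $u\in\mathsf{H}^4(\mathbb{R}_+)$ satisfying the boundary conditions; it is self-adjoint. *)

From Stdlib Require Import Reals.
From Coquelicot Require Import Coquelicot.
Open Scope R_scope.

Definition alpha0 (a : C) (a1 a2 : R) : C :=
  RtoC (a1 * a2 - (Cmod a) ^ 2).

Definition Omega (a : C) (a1 a2 : R) (z : C) : C :=
  (alpha0 a a1 a2
   + (RtoC 1 - Ci) * RtoC a2 * z
   + RtoC 2 * Ci * RtoC (Re a) * Cpow z 2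
   - (RtoC 1 + Ci) * RtoC a1 * Cpow z 3
   - Cpow z 4)%C.

Definition qrt (lam : R) : R := sqrt (sqrt lam).

Definition s_fun (a : C) (a1 a2 : R) (lam : R) : C :=
  (Cconj (Omega a a1 a2 (RtoC (qrt lam))) / Omega a a1 a2 (RtoC (qrt lam)))%C.

Definition b_fun (a : C) (a1 a2 : R) (lam : R) : C :=
  let k := RtoC (qrt lam) in
  ((alpha0 a a1 a2 + RtoC 2 * Ci * RtoC (Im a) * Cpow k 2 + Cpow k 4)
     / Omega a a1 a2 k)%C.

Definition smooth_pos (f : R -> C) : Prop :=
  forall (n : nat) (x : R), 0 < x ->
    ex_derive_n (fun t => Re (f t)) n x /\ ex_derive_n (fun t => Im (f t)) n x.

(* An eigenfunction u = ur + i ui is represented by its real and imaginary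
   parts on (0,+oo): they have derivatives up to order 4 there, the
   derivatives u^(j), j <= 3, have boundary values u^(j)(0) (limits from the
   right at 0), u^(j) is square integrable on (0,+oo) for j <= 4,
   u'''' = lam u, the boundary conditions hold, and u is not identically 0. *)
Definition is_eigenvalue_H (a : C) (a1 a2 : R) (lam : R) : Prop :=
  exists (ur ui : R -> R) (bv : nat -> C),
    (forall (j : nat) (x : R), (j <= 4)%nat -> 0 < x ->
        ex_derive_n ur j x /\ ex_derive_n ui j x) /\
    (forall j : nat, (j <= 3)%nat ->
        filterlim (Derive_n ur j) (at_right 0) (locally (Re (bv j))) /\
        filterlim (Derive_n ui j) (at_right 0) (locally (Im (bv j)))) /\
    (forall j : nat, (j <= 4)%nat ->
        ex_RInt_gen (fun x => (Derive_n ur j x) ^ 2 + (Derive_n ui j x) ^ 2)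
                    (at_right 0) (Rbar_locally p_infty)) /\
    (forall x : R, 0 < x ->
        Derive_n ur 4 x = lam * ur x /\ Derive_n ui 4 x = lam * ui x) /\
    bv 2%nat = (a * bv 0%nat + RtoC a1 * bv 1%nat)%C /\
    bv 3%nat = (- (RtoC a2 * bv 0%nat) - Cconj a * bv 1%nat)%C /\
    (exists x : R, 0 < x /\ (ur x <> 0 \/ ui x <> 0)).

(* Put k = lam^(1/4) > 0.  Omega(k) = 0 iff alpha = k^2 + alpha_1 k (in particular alpha is
   real) and alpha_2 = 2 k^3 + alpha_1 k^2, and this is exactly the condition for lam to be an
   eigenvalue of H.  Indeed an L_2 solution of u'''' = k^4 u is a multiple of e^(-k x): the
   functions |u''' + k u'' + k^2 u' + k^3 u|^2 and k^2 |u' + k u|^2 + |u'' + k u'|^2 are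
   nondecreasing and dominated by integrable ones, hence vanish; and e^(-k x) satisfies the
   boundary conditions exactly under the two relations above.  Such a root k0 is unique, so
   Omega(k) and the numerator of b share the single factor k - k0; cancelling it leaves
   quotients that are rational in lam^(1/4) with nonvanishing denominators, hence smooth
   extensions of s and b, whose values at k0 are computed directly. *)

From Stdlib Require Import Reals Lra Lia Classical.
From Coquelicot Require Import Coquelicot.
Open Scope R_scope.

Definition Ck (n : nat) (f : R -> R) : Prop :=
  forall k x, (k <= n)%nat -> 0 < x -> ex_derive_n f k x.

Definition smooth (f : R -> R) : Prop :=
  forall n x, 0 < x -> ex_derive_n f n x.

Lemma locally_pos x : 0 < x -> locally x (fun y => 0 < y).
Proof. intros Hx. apply (open_gt 0). exact Hx. Qed.

Lemma Ck_locally n f x : Ck n f -> 0 < x ->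
  locally x (fun y => forall k, (k <= n)%nat -> ex_derive_n f k y).
Proof.
  intros Hf Hx. generalize (locally_pos x Hx). apply filter_imp.
  intros y Hy k Hk. apply Hf; assumption.
Qed.

Lemma Ck_ext n f g : (forall x, 0 < x -> f x = g x) -> Ck n f -> Ck n g.
Proof.
  intros Hfg Hf k x Hk Hx. apply ex_derive_n_ext_loc with f.
  - generalize (locally_pos x Hx). apply filter_imp. exact Hfg.
  - apply Hf; assumption.
Qed.

Lemma Derive_n_Derive f k x : Derive_n (Derive f) k x = Derive_n f (S k) x.
Proof.
  change (Derive_n (Derive_n f 1) k x = Derive_n f (S k) x).
  rewrite Derive_n_comp, Nat.add_1_r. reflexivity.
Qed.

Lemma Ck_S n f :
  Ck (S n) f <-> (forall x, 0 < x -> ex_derive f x) /\ Ck n (Derive f).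
Proof.
  split.
  - intros Hf. split.
    + intros x Hx. exact (Hf 1%nat x ltac:(lia) Hx).
    + intros [|k] x Hk Hx; [exact I|].
      apply ex_derive_ext with (Derive_n f (S k)).
      * intros t. symmetry. apply Derive_n_Derive.
      * exact (Hf (S (S k)) x ltac:(lia) Hx).
  - intros [Hf Hdf] [|[|k]] x Hk Hx; [exact I | exact (Hf x Hx) |].
    apply ex_derive_ext with (Derive_n (Derive f) k).
    + intros t. apply Derive_n_Derive.
    + exact (Hdf (S k) x ltac:(lia) Hx).
Qed.

Lemma Ck_const n c : Ck n (fun _ => c).
Proof.
  intros [|[|k]] x _ _; [exact I | apply ex_derive_const |].
  apply ex_derive_ext with (fun _ => 0).
  - intros t. symmetry. apply Derive_n_const.
  - apply ex_derive_const.
Qed.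

Lemma Ck_plus n f g : Ck n f -> Ck n g -> Ck n (fun x => f x + g x).
Proof.
  intros Hf Hg k x Hk Hx. apply ex_derive_n_plus.
  - generalize (Ck_locally n f x Hf Hx). apply filter_imp.
    intros y Hy j Hj. apply Hy. lia.
  - generalize (Ck_locally n g x Hg Hx). apply filter_imp.
    intros y Hy j Hj. apply Hy. lia.
Qed.

Lemma Ck_le m n f : (m <= n)%nat -> Ck n f -> Ck m f.
Proof. intros Hmn Hf k x Hk Hx. apply Hf; [lia | assumption]. Qed.

Lemma Ck_mult n : forall f g, Ck n f -> Ck n g -> Ck n (fun x => f x * g x).
Proof.
  induction n as [|n IH]; intros f g Hf Hg.
  { intros k x Hk _. replace k with 0%nat by lia. exact I. }
  destruct (proj1 (Ck_S n f) Hf) as [Df Hf'].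
  destruct (proj1 (Ck_S n g) Hg) as [Dg Hg'].
  apply Ck_S. split.
  - intros x Hx. apply ex_derive_mult; auto.
  - apply Ck_ext with (fun x => Derive f x * g x + f x * Derive g x).
    + intros x Hx. symmetry. apply Derive_mult; auto.
    + apply Ck_plus; apply IH; try assumption; apply Ck_le with (S n); auto.
Qed.

Lemma Ck_inv n : forall f, Ck n f -> (forall x, 0 < x -> f x <> 0) ->
  Ck n (fun x => / f x).
Proof.
  induction n as [|n IH]; intros f Hf Hnz.
  { intros k x Hk _. replace k with 0%nat by lia. exact I. }
  destruct (proj1 (Ck_S n f) Hf) as [Df Hf'].
  apply Ck_S. split.
  - intros x Hx. apply ex_derive_inv; auto.
  - apply Ck_ext with (fun x => - Derive f x * (/ f x * / f x)).
    + intros x Hx. rewrite Derive_inv by auto. field. auto.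
    + apply Ck_mult.
      * apply Ck_ext with (fun x => -1 * Derive f x); [intros; ring|].
        apply Ck_mult; [apply Ck_const | assumption].
      * apply Ck_mult; apply IH; auto; apply Ck_le with (S n); auto.
Qed.

Lemma smooth_Ck f : smooth f <-> forall n, Ck n f.
Proof.
  split.
  - intros Hf n k x _ Hx. apply Hf. assumption.
  - intros Hf n x Hx. exact (Hf n n x (le_n n) Hx).
Qed.

Lemma smooth_const c : smooth (fun _ => c).
Proof. apply smooth_Ck. intros n. apply Ck_const. Qed.

Lemma smooth_plus f g : smooth f -> smooth g -> smooth (fun x => f x + g x).
Proof. rewrite !smooth_Ck. intros Hf Hg n. apply Ck_plus; auto. Qed.

Lemma smooth_mult f g : smooth f -> smooth g -> smooth (fun x => f x * g x).
Proof. rewrite !smooth_Ck. intros Hf Hg n. apply Ck_mult; auto. Qed.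

Lemma smooth_inv f : smooth f -> (forall x, 0 < x -> f x <> 0) ->
  smooth (fun x => / f x).
Proof. rewrite !smooth_Ck. intros Hf Hnz n. apply Ck_inv; auto. Qed.

Lemma smooth_ext f g : (forall x, 0 < x -> f x = g x) -> smooth f -> smooth g.
Proof. rewrite !smooth_Ck. intros Hfg Hf n. apply Ck_ext with f; auto. Qed.

Lemma smooth_opp f : smooth f -> smooth (fun x => - f x).
Proof.
  intros Hf. apply (smooth_ext (fun x => -1 * f x)); [intros; ring|].
  apply smooth_mult; [apply smooth_const | assumption].
Qed.

Lemma smooth_minus f g : smooth f -> smooth g -> smooth (fun x => f x - g x).
Proof. intros Hf Hg. apply smooth_plus; [|apply smooth_opp]; assumption. Qed.

Lemma smooth_pow f m : smooth f -> smooth (fun x => f x ^ m).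
Proof.
  intros Hf. induction m as [|m IH]; [exact (smooth_const 1)|].
  apply smooth_mult; assumption.
Qed.

Lemma smooth_div f g : smooth f -> smooth g -> (forall x, 0 < x -> g x <> 0) ->
  smooth (fun x => f x / g x).
Proof. intros Hf Hg Hnz. apply smooth_mult; [|apply smooth_inv]; assumption. Qed.

Lemma qrt_pos x : 0 < x -> 0 < qrt x.
Proof. intros Hx. unfold qrt. apply sqrt_lt_R0, sqrt_lt_R0, Hx. Qed.

Lemma qrt_sqr x : 0 < x -> qrt x * qrt x = sqrt x.
Proof. intros Hx. unfold qrt. apply sqrt_sqrt, sqrt_pos. Qed.

Lemma qrt_pow4 x : 0 < x -> qrt x ^ 4 = x.
Proof.
  intros Hx. replace (qrt x ^ 4) with ((qrt x * qrt x) * (qrt x * qrt x)) by ring.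
  rewrite qrt_sqr by assumption. apply sqrt_sqrt. lra.
Qed.

Lemma is_derive_qrt x : 0 < x -> is_derive qrt x (/ (4 * qrt x ^ 3)).
Proof.
  intros Hx. assert (Hs := sqrt_lt_R0 x Hx). assert (Hq := qrt_pos x Hx).
  assert (E := qrt_sqr x Hx). unfold qrt in *.
  auto_derive; [lra|]. set (q := sqrt (sqrt x)) in *.
  replace (q ^ 3) with (sqrt x * q) by (rewrite <- E; ring).
  field. lra.
Qed.

Lemma smooth_qrt : smooth qrt.
Proof.
  apply smooth_Ck. induction n as [|n IH].
  { intros k x Hk _. replace k with 0%nat by lia. exact I. }
  apply Ck_S. split.
  - intros x Hx. eexists. apply is_derive_qrt, Hx.
  - apply Ck_ext with (fun x => / (4 * qrt x ^ 3)).
    + intros x Hx. symmetry. apply is_derive_unique, is_derive_qrt, Hx.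
    + apply Ck_inv.
      * apply Ck_mult; [apply Ck_const|].
        apply Ck_mult; [assumption|]. apply Ck_mult; [assumption|].
        apply Ck_mult; [assumption | apply Ck_const].
      * intros x Hx. assert (Hq := qrt_pos x Hx).
        apply Rgt_not_eq. apply Rmult_lt_0_compat; [lra | apply pow_lt, Hq].
Qed.

Ltac smooth_poly := repeat match goal with
  | |- smooth (fun _ => ?c) => exact (smooth_const c)
  | |- smooth (fun x => qrt x) => exact smooth_qrt
  | |- smooth qrt => exact smooth_qrt
  | |- smooth (fun _ => _ + _) => apply smooth_plus
  | |- smooth (fun _ => _ - _) => apply smooth_minus
  | |- smooth (fun _ => _ * _) => apply smooth_mult
  | |- smooth (fun _ => - _) => apply smooth_opp
  | |- smooth (fun _ => _ ^ _) => apply smooth_pow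
  end.

Lemma smooth_pos_iff f :
  smooth_pos f <-> smooth (fun x => Re (f x)) /\ smooth (fun x => Im (f x)).
Proof. split; [intros Hf; split; intros n x Hx; apply Hf, Hx | intros [Hr Hi] n x Hx; auto]. Qed.

Lemma smooth_pos_intro f :
  smooth (fun x => Re (f x)) -> smooth (fun x => Im (f x)) -> smooth_pos f.
Proof. intros Hr Hi. apply smooth_pos_iff. split; assumption. Qed.

Lemma smooth_pos_ext f g : (forall x, 0 < x -> f x = g x) -> smooth_pos f -> smooth_pos g.
Proof.
  rewrite !smooth_pos_iff. intros Hfg [Hr Hi].
  split; [apply (smooth_ext (fun x => Re (f x))) | apply (smooth_ext (fun x => Im (f x)))];
    auto; intros x Hx; rewrite Hfg; auto.
Qed.

Lemma sum_sqr_eq0 x y : x ^ 2 + y ^ 2 = 0 -> x = 0 /\ y = 0.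
Proof. intros H. split; nra. Qed.

Lemma sum_sqr_neq0 x y : y <> 0 -> x ^ 2 + y ^ 2 <> 0.
Proof. intros Hy H. apply sum_sqr_eq0 in H. tauto. Qed.

Lemma Cnorm2_neq0 (z : C) : z <> 0%C -> Re z ^ 2 + Im z ^ 2 <> 0.
Proof.
  destruct z as [u v]. simpl. intros Hz H. apply Hz.
  apply sum_sqr_eq0 in H as [-> ->]. reflexivity.
Qed.

Lemma Cdiv_scal (c : R) (w z : C) : c <> 0 -> z <> 0%C ->
  (RtoC c * w / (RtoC c * z))%C = (w / z)%C.
Proof.
  intros Hc Hz. field. split; [assumption|].
  intros H. apply Hc, RtoC_inj, H.
Qed.

Lemma Cconj_div_scal (c : R) (z : C) : c <> 0 -> z <> 0%C ->
  (Cconj (RtoC c * z) / (RtoC c * z))%C = (Cconj z / z)%C.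
Proof.
  intros Hc Hz. rewrite Cmult_conj.
  replace (Cconj (RtoC c)) with (RtoC c)
    by (apply injective_projections; simpl; ring).
  apply Cdiv_scal; assumption.
Qed.

Lemma Cmult_eq0_r (z c : C) : c <> 0%C -> (z * c)%C = 0%C -> z = 0%C.
Proof.
  intros Hc Hzc. replace z with (z * c / c)%C by (field; exact Hc).
  rewrite Hzc. field. exact Hc.
Qed.

Lemma smooth_pos_conj f : smooth_pos f -> smooth_pos (fun x => Cconj (f x)).
Proof.
  rewrite !smooth_pos_iff. intros [Hr Hi]. split; [exact Hr|]. apply smooth_opp, Hi.
Qed.

Lemma smooth_pos_div f g : smooth_pos f -> smooth_pos g ->
  (forall x, 0 < x -> g x <> 0) -> smooth_pos (fun x => (f x / g x)%C).
Proof.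
  rewrite !smooth_pos_iff. intros [Hfr Hfi] [Hgr Hgi] Hg.
  assert (Hd : smooth (fun x => Re (g x) ^ 2 + Im (g x) ^ 2))
    by (apply smooth_plus; apply smooth_pow; assumption).
  assert (Hnz : forall x, 0 < x -> Re (g x) ^ 2 + Im (g x) ^ 2 <> 0)
    by (intros x Hx; apply Cnorm2_neq0, Hg, Hx).
  set (N x := Re (g x) ^ 2 + Im (g x) ^ 2) in *.
  assert (Hre : smooth (fun x => Re (g x) / N x)) by exact (smooth_div _ _ Hgr Hd Hnz).
  assert (Him : smooth (fun x => - Im (g x) / N x))
    by exact (smooth_div _ _ (smooth_opp _ Hgi) Hd Hnz).
  split.
  - apply (smooth_ext (fun x => Re (f x) * (Re (g x) / N x) - Im (f x) * (- Im (g x) / N x)));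
      [reflexivity|].
    exact (smooth_minus _ _ (smooth_mult _ _ Hfr Hre) (smooth_mult _ _ Hfi Him)).
  - apply (smooth_ext (fun x => Re (f x) * (- Im (g x) / N x) + Im (f x) * (Re (g x) / N x)));
      [reflexivity|].
    exact (smooth_plus _ _ (smooth_mult _ _ Hfr Him) (smooth_mult _ _ Hfi Hre)).
Qed.

Definition b_numer (a : C) (a1 a2 : R) (z : C) : C :=
  (alpha0 a a1 a2 + RtoC 2 * Ci * RtoC (Im a) * Cpow z 2 + Cpow z 4)%C.

Definition root_condition (a : C) (a1 a2 k : R) : Prop :=
  a = RtoC (k ^ 2 + a1 * k) /\ a2 = 2 * k ^ 3 + a1 * k ^ 2.

Lemma Cmod_sqr p q : Cmod (p, q) ^ 2 = p ^ 2 + q ^ 2.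
Proof. unfold Cmod. rewrite pow2_sqrt; simpl; nra. Qed.

Lemma Omega_RtoC p q a1 a2 k :
  Omega (p, q) a1 a2 (RtoC k) =
  (a1 * a2 - (p ^ 2 + q ^ 2) + a2 * k - a1 * k ^ 3 - k ^ 4,
   - a2 * k + 2 * p * k ^ 2 - a1 * k ^ 3).
Proof.
  unfold Omega, alpha0. rewrite Cmod_sqr.
  apply injective_projections; simpl; ring.
Qed.

Lemma b_numer_RtoC p q a1 a2 k :
  b_numer (p, q) a1 a2 (RtoC k) = (a1 * a2 - (p ^ 2 + q ^ 2) + k ^ 4, 2 * q * k ^ 2).
Proof.
  unfold b_numer, alpha0. rewrite Cmod_sqr.
  apply injective_projections; simpl; ring.
Qed.

Lemma Omega_eq0_iff p q a1 a2 k : 0 < k ->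
  Omega (p, q) a1 a2 (RtoC k) = 0%C <-> root_condition (p, q) a1 a2 k.
Proof.
  intros Hk. rewrite Omega_RtoC. unfold root_condition. split.
  - intros H. injection H as Hre Him.
    assert (Ha2 : a2 = 2 * p * k - a1 * k ^ 2).
    { apply Rmult_eq_reg_l with k; [nra | lra]. }
    subst a2.
    (* with a2 eliminated, Re Omega(k) is minus a sum of two squares *)
    assert (Hsq : (p - k ^ 2 - a1 * k) ^ 2 + q ^ 2 = 0).
    { transitivity (- (a1 * (2 * p * k - a1 * k ^ 2) - (p ^ 2 + q ^ 2)
                        + (2 * p * k - a1 * k ^ 2) * k - a1 * k ^ 3 - k ^ 4));
        [ring | lra]. }
    apply sum_sqr_eq0 in Hsq as [Hp ->].
    replace p with (k ^ 2 + a1 * k) by lra.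
    split; [reflexivity | ring].
  - intros [Ha Ha2]. injection Ha as -> ->. subst a2.
    apply injective_projections; simpl; ring.
Qed.

Lemma root_condition_unique a a1 a2 k k0 : 0 < k -> 0 < k0 ->
  root_condition a a1 a2 k -> root_condition a a1 a2 k0 -> k = k0.
Proof.
  intros Hk Hk0 [Ha Ha2] [Ha' Ha2']. rewrite Ha in Ha'.
  apply RtoC_inj in Ha'.
  destruct (Req_dec k k0) as [|Hne]; [assumption | exfalso].
  assert (Ha1 : a1 = - (k + k0)).
  { apply Rmult_eq_reg_l with (k - k0); [nra | lra]. }
  subst a1.
  assert (H : (k - k0) * (k ^ 2 + k0 ^ 2) = 0) by nra.
  apply Rmult_integral in H as [H | H]; [lra | nra].
Qed.

Definition Omega_quot (a1 k0 k : R) : C :=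
  (- k ^ 3 - (a1 + k0) * k ^ 2 - (a1 * k0 + k0 ^ 2) * k + k0 ^ 3,
   k * (- a1 * k + 2 * k0 ^ 2 + a1 * k0)).

Definition b_numer_quot (k0 k : R) : R := (k + k0) * (k ^ 2 + k0 ^ 2).

Lemma Omega_factor a a1 a2 k0 k : root_condition a a1 a2 k0 ->
  Omega a a1 a2 (RtoC k) = (RtoC (k - k0) * Omega_quot a1 k0 k)%C.
Proof.
  destruct a as [p q]. intros [Ha ->]. injection Ha as -> ->. rewrite Omega_RtoC. unfold Omega_quot.
  apply injective_projections; simpl; ring.
Qed.

Lemma b_numer_factor a a1 a2 k0 k : root_condition a a1 a2 k0 ->
  b_numer a a1 a2 (RtoC k) = (RtoC (k - k0) * RtoC (b_numer_quot k0 k))%C.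
Proof.
  destruct a as [p q]. intros [Ha ->]. injection Ha as -> ->. rewrite b_numer_RtoC. unfold b_numer_quot.
  apply injective_projections; simpl; ring.
Qed.

Lemma Omega_quot_neq0 a a1 a2 k0 k : 0 < k0 -> 0 < k ->
  root_condition a a1 a2 k0 -> Omega_quot a1 k0 k <> 0%C.
Proof.
  intros Hk0 Hk Hroot HQ. destruct (Req_dec k k0) as [-> | Hne].
  - apply (f_equal Im) in HQ. simpl in HQ.
    assert (0 < k0 * k0 * k0) by (repeat apply Rmult_lt_0_compat; lra). nra.
  - apply Hne, (root_condition_unique a a1 a2); try assumption.
    destruct a as [p q]. apply Omega_eq0_iff; [assumption|].
    rewrite (Omega_factor _ _ _ _ _ Hroot), HQ. apply Cmult_0_r.
Qed.

Lemma quotients_at_root a a1 a2 k0 : 0 < k0 -> root_condition a a1 a2 k0 ->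
  (Cconj (Omega_quot a1 k0 k0) / Omega_quot a1 k0 k0)%C
    = ((a + Ci * RtoC (k0 ^ 2)) / (a - Ci * RtoC (k0 ^ 2)))%C /\
  (RtoC (b_numer_quot k0 k0) / Omega_quot a1 k0 k0)%C
    = (- (RtoC 2 * RtoC (k0 ^ 2)) / (a - Ci * RtoC (k0 ^ 2)))%C.
Proof.
  intros Hk0 [-> _].
  replace (Omega_quot a1 k0 k0) with (- 2 * k0 * (k0 ^ 2 + a1 * k0), 2 * k0 ^ 3)
    by (unfold Omega_quot; apply injective_projections; simpl; ring).
  unfold b_numer_quot.
  assert (Hk2 : - k0 ^ 2 <> 0) by (apply Ropp_neq_0_compat, pow_nonzero; lra).
  assert (Hk3 : 2 * k0 ^ 3 <> 0)
    by (apply Rmult_integral_contrapositive; split; [lra | apply pow_nonzero; lra]).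
  split; apply injective_projections;
    cbn [fst snd Cconj Cdiv Cmult Cinv Cplus Cminus Copp RtoC Ci];
    field; split; apply sum_sqr_neq0; assumption.
Qed.

Lemma nondecreasing_of_derive_nonneg f df :
  (forall x, 0 < x -> is_derive f x (df x)) -> (forall x, 0 < x -> 0 <= df x) ->
  forall x y, 0 < x -> x <= y -> f x <= f y.
Proof.
  intros Hd Hp x y Hx Hxy.
  destruct (MVT_gen f x y df) as [c [Hc E]]; rewrite ?Rmin_left, ?Rmax_right in * by lra.
  - intros t Ht. apply Hd. lra.
  - intros t Ht. apply continuity_pt_filterlim, (ex_derive_continuous f).
    eexists. apply Hd. lra.
  - assert (0 <= df c) by (apply Hp; lra). nra.
Qed.

Lemma constant_of_derive_zero f :
  (forall x, 0 < x -> is_derive f x 0) -> forall x, 0 < x -> f x = f 1.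
Proof.
  intros Hd.
  assert (Hmono := nondecreasing_of_derive_nonneg f (fun _ => 0) Hd (fun _ _ => Rle_refl 0)).
  assert (Hopp : forall x, 0 < x -> is_derive (fun y => - f y) x 0).
  { intros x Hx. replace 0 with (- 0) by ring. apply (is_derive_opp f), Hd, Hx. }
  assert (Hanti := nondecreasing_of_derive_nonneg _ (fun _ => 0) Hopp (fun _ _ => Rle_refl 0)).
  intros x Hx. destruct (Rle_dec x 1).
  - specialize (Hmono x 1 Hx r). specialize (Hanti x 1 Hx r). simpl in *. lra.
  - specialize (Hmono 1 x Rlt_0_1 ltac:(lra)). specialize (Hanti 1 x Rlt_0_1 ltac:(lra)).
    simpl in *. lra.
Qed.

Lemma ex_RInt_gen_lower_bound_nonpos (g : R -> R) x0 eps : 0 < x0 ->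
  ex_RInt_gen g (at_right 0) (Rbar_locally p_infty) ->
  (forall x, x0 <= x -> eps <= g x) -> eps <= 0.
Proof.
  intros Hx0 [l Hl] Hg. apply Rnot_lt_le. intros Heps.
  (* two integrals [a, b1] and [a, b2] within 1 of l, with b2 - b1 = 3 / eps *)
  destruct (Hl _ (locally_ball l (mkposreal 1 Rlt_0_1))) as [Q Rb [d Hd] [M HM] HP].
  set (a := d / 2).
  assert (Ha : 0 < a) by (unfold a; generalize (cond_pos d); lra).
  assert (Qa : Q a).
  { apply Hd; [|exact Ha]. change (Rabs (a - 0) < d).
    rewrite Rminus_0_r, Rabs_pos_eq by lra. unfold a; generalize (cond_pos d); lra. }
  set (b1 := Rmax (M + 1) (Rmax x0 a)).
  assert (Hb1 : M < b1 /\ x0 <= b1 /\ a <= b1).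
  { unfold b1. generalize (Rmax_l (M + 1) (Rmax x0 a)) (Rmax_r (M + 1) (Rmax x0 a))
      (Rmax_l x0 a) (Rmax_r x0 a). lra. }
  set (b2 := b1 + 3 / eps).
  assert (H3 : 0 < 3 / eps) by (apply Rdiv_lt_0_compat; lra).
  destruct (HP a b1 Qa (HM b1 ltac:(lra))) as [y1 [I1 B1]].
  destruct (HP a b2 Qa (HM b2 ltac:(unfold b2; lra))) as [y2 [I2 B2]].
  simpl in I1, I2. change (Rabs (y1 - l) < 1) in B1. change (Rabs (y2 - l) < 1) in B2.
  destruct (@ex_RInt_Chasles_2 R_CompleteNormedModule g a b1 b2 ltac:(unfold b2; lra)
              (ex_intro _ y2 I2)) as [z Iz].
  assert (E : y2 = y1 + z).
  { rewrite <- (is_RInt_unique g a b2 y2 I2).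
    exact (is_RInt_unique g a b2 _ (is_RInt_Chasles g a b1 b2 y1 z I1 Iz)). }
  assert (Hz : (b2 - b1) * eps <= z).
  { apply (is_RInt_le (fun _ => eps) g b1 b2); [unfold b2; lra | exact (is_RInt_const b1 b2 eps) | exact Iz |].
    intros t Ht. apply Hg. lra. }
  unfold b2 in Hz. replace ((b1 + 3 / eps - b1) * eps) with 3 in Hz by (field; lra).
  apply Rabs_lt_between in B1. apply Rabs_lt_between in B2. lra.
Qed.

Lemma dominated_nondecreasing_nonpos (W h : R -> R) :
  ex_RInt_gen h (at_right 0) (Rbar_locally p_infty) ->
  (forall x y, 0 < x -> x <= y -> W x <= W y) -> (forall x, 0 < x -> W x <= h x) ->
  forall x, 0 < x -> W x <= 0.
Proof.
  intros Hh Hmono Hdom x0 Hx0. apply (ex_RInt_gen_lower_bound_nonpos h x0); try assumption.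
  intros x Hx. apply Rle_trans with (W x); [apply Hmono | apply Hdom]; lra.
Qed.

Lemma ex_RInt_gen_plus {Fa Fb : (R -> Prop) -> Prop} {FFa : Filter Fa} {FFb : Filter Fb}
  (f g : R -> R) :
  ex_RInt_gen f Fa Fb -> ex_RInt_gen g Fa Fb -> ex_RInt_gen (fun x => f x + g x) Fa Fb.
Proof.
  intros [lf Hf] [lg Hg]. exists (plus lf lg). exact (is_RInt_gen_plus f g lf lg Hf Hg).
Qed.

Lemma ex_RInt_gen_scal {Fa Fb : (R -> Prop) -> Prop} {FFa : Filter Fa} {FFb : Filter Fb}
  (f : R -> R) c :
  ex_RInt_gen f Fa Fb -> ex_RInt_gen (fun x => c * f x) Fa Fb.
Proof. intros [l Hf]. exists (scal c l). exact (is_RInt_gen_scal f c l Hf). Qed.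

Lemma sqr_sum2_le a b : (a + b) ^ 2 <= 2 * (a ^ 2 + b ^ 2).
Proof. pose proof (pow2_ge_0 (a - b)). nra. Qed.

Lemma sqr_sum4_le a b c d : (a + b + c + d) ^ 2 <= 4 * (a ^ 2 + b ^ 2 + c ^ 2 + d ^ 2).
Proof.
  pose proof (pow2_ge_0 (a - b)). pose proof (pow2_ge_0 (a - c)). pose proof (pow2_ge_0 (a - d)).
  pose proof (pow2_ge_0 (b - c)). pose proof (pow2_ge_0 (b - d)). pose proof (pow2_ge_0 (c - d)).
  nra.
Qed.

Section DecayingSolution.

Variables (f : nat -> R -> R) (k : R) (h : R -> R).
Hypothesis k_pos : 0 < k.
Hypothesis f_deriv : forall j x, (j <= 3)%nat -> 0 < x -> is_derive (f j) x (f (S j) x).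
Hypothesis f_ode : forall x, 0 < x -> f 4%nat x = k ^ 4 * f 0%nat x.
Hypothesis h_int : ex_RInt_gen h (at_right 0) (Rbar_locally p_infty).
Hypothesis f_dom : forall j x, (j <= 3)%nat -> 0 < x -> f j x ^ 2 <= h x.

Lemma ex_derive_f j x : (j <= 3)%nat -> 0 < x -> ex_derive (f j) x.
Proof. intros Hj Hx. exists (f (S j) x). exact (f_deriv j x Hj Hx). Qed.

Lemma Derive_f j x : (j <= 3)%nat -> 0 < x -> Derive (f j) x = f (S j) x.
Proof. intros Hj Hx. exact (is_derive_unique _ _ _ (f_deriv j x Hj Hx)). Qed.

Lemma f_dom_pow j m x : (j <= 3)%nat -> 0 < x -> k ^ m * f j x ^ 2 <= k ^ m * h x.
Proof.
  intros Hj Hx. apply Rmult_le_compat_l; [apply pow_le; lra | apply f_dom; assumption].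
Qed.

Ltac derive_f x Hx :=
  auto_derive;
  [ repeat split; apply ex_derive_f; first [lia | exact Hx]
  | rewrite ?Derive_f by first [lia | exact Hx] ].

Lemma third_order_factor x :
  0 < x -> f 3%nat x + k * f 2%nat x + k ^ 2 * f 1%nat x + k ^ 3 * f 0%nat x = 0.
Proof.
  set (L y := f 3%nat y + k * f 2%nat y + k ^ 2 * f 1%nat y + k ^ 3 * f 0%nat y).
  (* L' = k L, so L^2 grows while being dominated by an integrable function *)
  assert (HW : forall y, 0 < y -> is_derive (fun t => L t ^ 2) y (2 * k * L y ^ 2)).
  { intros y Hy. unfold L. derive_f y Hy. rewrite f_ode by exact Hy. ring. }
  set (c := 4 * (1 + k ^ 2 + k ^ 4 + k ^ 6)).
  assert (Hdom : forall y, 0 < y -> L y ^ 2 <= c * h y).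
  { intros y Hy. unfold L, c.
    eapply Rle_trans; [apply sqr_sum4_le|].
    pose proof (f_dom 3 y ltac:(lia) Hy). pose proof (f_dom_pow 2 2 y ltac:(lia) Hy).
    pose proof (f_dom_pow 1 4 y ltac:(lia) Hy). pose proof (f_dom_pow 0 6 y ltac:(lia) Hy).
    replace ((k * f 2%nat y) ^ 2) with (k ^ 2 * f 2%nat y ^ 2) by ring.
    replace ((k ^ 2 * f 1%nat y) ^ 2) with (k ^ 4 * f 1%nat y ^ 2) by ring.
    replace ((k ^ 3 * f 0%nat y) ^ 2) with (k ^ 6 * f 0%nat y ^ 2) by ring.
    lra. }
  assert (HW_nonneg : forall y, 0 < y -> 0 <= 2 * k * L y ^ 2).
  { intros y _. pose proof (pow2_ge_0 (L y)). nra. }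
  intros Hx.
  assert (H := dominated_nondecreasing_nonpos _ _ (ex_RInt_gen_scal h c h_int)
    (nondecreasing_of_derive_nonneg _ _ HW HW_nonneg) Hdom x Hx).
  pose proof (pow2_ge_0 (L x)). assert (HL : L x ^ 2 = 0) by lra.
  apply Rsqr_0_uniq. rewrite Rsqr_pow2. exact HL.
Qed.

Lemma first_order_factor x : 0 < x -> f 1%nat x + k * f 0%nat x = 0.
Proof.
  set (E y := k ^ 2 * (f 1%nat y + k * f 0%nat y) ^ 2 + (f 2%nat y + k * f 1%nat y) ^ 2).
  (* E' = 2 (f2 + k f1) L, with L the vanishing combination of third_order_factor *)
  assert (HE : forall y, 0 < y -> is_derive E y 0).
  { intros y Hy. unfold E. derive_f y Hy.
    transitivity (2 * (f 2%nat y + k * f 1%nat y) *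
      (f 3%nat y + k * f 2%nat y + k ^ 2 * f 1%nat y + k ^ 3 * f 0%nat y)); [ring|].
    rewrite third_order_factor by exact Hy. ring. }
  set (c := 2 + 4 * k ^ 2 + 2 * k ^ 4).
  assert (Hdom : forall y, 0 < y -> E y <= c * h y).
  { intros y Hy. unfold E, c.
    pose proof (sqr_sum2_le (f 1%nat y) (k * f 0%nat y)) as H1.
    pose proof (sqr_sum2_le (f 2%nat y) (k * f 1%nat y)) as H2.
    assert (Hk2 : 0 <= k ^ 2) by (apply pow_le; lra).
    apply (Rmult_le_compat_l (k ^ 2)) in H1; [|exact Hk2].
    pose proof (f_dom 2 y ltac:(lia) Hy). pose proof (f_dom_pow 1 2 y ltac:(lia) Hy).
    pose proof (f_dom_pow 0 4 y ltac:(lia) Hy).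
    replace (k ^ 2 * (2 * (f 1%nat y ^ 2 + (k * f 0%nat y) ^ 2)))
      with (2 * (k ^ 2 * f 1%nat y ^ 2) + 2 * (k ^ 4 * f 0%nat y ^ 2)) in H1 by ring.
    replace ((k * f 1%nat y) ^ 2) with (k ^ 2 * f 1%nat y ^ 2) in H2 by ring.
    lra. }
  intros Hx.
  assert (H := dominated_nondecreasing_nonpos _ _ (ex_RInt_gen_scal h c h_int)
    (nondecreasing_of_derive_nonneg _ _ HE (fun _ _ => Rle_refl 0)) Hdom x Hx).
  unfold E in H.
  pose proof (pow2_ge_0 (f 1%nat x + k * f 0%nat x)). pose proof (pow2_ge_0 (f 2%nat x + k * f 1%nat x)).
  assert (Hk2 : 0 < k ^ 2) by (apply pow_lt; lra).
  assert (HL : (f 1%nat x + k * f 0%nat x) ^ 2 = 0) by nra.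
  apply Rsqr_0_uniq. rewrite Rsqr_pow2. exact HL.
Qed.

Lemma decaying_exponential :
  exists c, forall j x, (j <= 3)%nat -> 0 < x -> f j x = c * (- k) ^ j * exp (- k * x).
Proof.
  set (g y := f 0%nat y * exp (k * y)).
  assert (Hg : forall y, 0 < y -> is_derive g y 0).
  { intros y Hy. unfold g. derive_f y Hy.
    transitivity ((f 1%nat y + k * f 0%nat y) * exp (k * y)); [ring|].
    rewrite first_order_factor by exact Hy. ring. }
  exists (g 1). intros j. induction j as [|j IH]; intros x Hj Hx.
  - rewrite <- (constant_of_derive_zero g Hg x Hx). unfold g.
    assert (E : exp (k * x) * exp (- k * x) = 1).
    { rewrite <- exp_plus. replace (k * x + - k * x) with 0 by ring. apply exp_0. }
    transitivity (f 0%nat x * (exp (k * x) * exp (- k * x))); [rewrite E | simpl]; ring.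
  - rewrite <- (Derive_f j x ltac:(lia) Hx).
    rewrite (Derive_ext_loc (f j) (fun y => g 1 * (- k) ^ j * exp (- k * y))).
    + apply is_derive_unique. auto_derive; [exact I | simpl; ring].
    + generalize (locally_pos x Hx). apply filter_imp. intros y Hy. apply IH; [lia | exact Hy].
Qed.

End DecayingSolution.

Lemma limit_at_right_unique (f g : R -> R) l :
  (forall x, 0 < x -> f x = g x) -> continuous g 0 ->
  filterlim f (at_right 0) (locally l) -> l = g 0.
Proof.
  intros Hfg Hg Hf.
  assert (Hg' : filterlim f (at_right 0) (locally (g 0))).
  { apply filterlim_ext_loc with g.
    - exists (mkposreal 1 Rlt_0_1). intros y _ Hy. symmetry. apply Hfg, Hy.
    - eapply filterlim_filter_le_1; [apply filter_le_within | exact Hg]. }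
  exact (filterlim_locally_unique f l (g 0) Hf Hg').
Qed.

Lemma limit_at_right_exp (u : R -> R) c m l :
  (forall x, 0 < x -> u x = c * exp (- m * x)) ->
  filterlim u (at_right 0) (locally l) -> l = c.
Proof.
  intros Hu Hl. rewrite (limit_at_right_unique u (fun x => c * exp (- m * x)) l Hu).
  - cbv beta. rewrite Rmult_0_r, exp_0, Rmult_1_r. reflexivity.
  - apply (ex_derive_continuous (fun x => c * exp (- m * x))). auto_derive. exact I.
  - exact Hl.
Qed.

Lemma filterlim_exp_decay c m : 0 < m ->
  filterlim (fun x => c * exp (- m * x)) (Rbar_locally p_infty) (locally 0).
Proof.
  intros Hm.
  assert (H1 : filterlim (fun x => - m * x) (Rbar_locally p_infty) (Rbar_locally m_infty)).
  { intros P [M HM]. exists (- M / m). intros x Hx. apply HM.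
    apply (Rmult_lt_compat_l m) in Hx; [|exact Hm].
    replace (m * (- M / m)) with (- M) in Hx by (field; lra). lra. }
  assert (H2 := filterlim_comp _ _ _ _ _ _ _ _ H1 is_lim_exp_m).
  assert (H3 := filterlim_comp _ _ _ _ (fun z => scal c z) _ _ _ H2 (filterlim_scal_r c 0)).
  replace 0 with (scal c 0) by apply Rmult_0_r. exact H3.
Qed.

Lemma ex_RInt_gen_exp_decay c m : 0 < m ->
  ex_RInt_gen (fun x => c * exp (- m * x)) (at_right 0) (Rbar_locally p_infty).
Proof.
  intros Hm.
  set (F x := - c / m * exp (- m * x)).
  assert (HF : forall x, is_derive F x (c * exp (- m * x))).
  { intros x. unfold F. auto_derive; [exact I | field; lra]. }
  apply ex_RInt_gen_ext_eq with (Derive F).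
  { intros x. apply is_derive_unique, HF. }
  exists (0 - F 0). apply is_RInt_gen_Derive.
  - apply filter_forall. intros ab x _. eexists. apply HF.
  - apply filter_forall. intros ab x _.
    apply continuous_ext with (fun y => c * exp (- m * y)).
    + intros y. symmetry. apply is_derive_unique, HF.
    + apply (ex_derive_continuous (fun y => c * exp (- m * y))). auto_derive. exact I.
  - eapply filterlim_filter_le_1; [apply filter_le_within|].
    apply (ex_derive_continuous F). eexists. apply HF.
  - apply filterlim_exp_decay, Hm.
Qed.

Lemma Derive_n_exp_decay m j x : Derive_n (fun y => exp (- m * y)) j x = (- m) ^ j * exp (- m * x).
Proof.
  revert x. induction j as [|j IH]; intros x; [simpl; ring|].
  simpl. rewrite (Derive_ext _ (fun y => (- m) ^ j * exp (- m * y)) x IH).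
  apply is_derive_unique. auto_derive; [exact I | ring].
Qed.

Lemma Derive_n_zero j x : Derive_n (fun _ => 0) j x = 0.
Proof. destruct j; [reflexivity | apply Derive_n_const]. Qed.

Lemma boundary_conditions_root a a1 a2 k (c : C) (bv : nat -> C) : c <> 0%C ->
  (forall j, (j <= 3)%nat -> bv j = (RtoC ((- k) ^ j) * c)%C) ->
  bv 2%nat = (a * bv 0%nat + RtoC a1 * bv 1%nat)%C ->
  bv 3%nat = (- (RtoC a2 * bv 0%nat) - Cconj a * bv 1%nat)%C ->
  root_condition a a1 a2 k.
Proof.
  intros Hc Hbv H2 H3.
  rewrite !Hbv in H2, H3 by lia.
  destruct a as [p q], c as [u v].
  assert (E1 : ((RtoC (k ^ 2 + a1 * k) - (p, q)) * (u, v))%C = 0%C).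
  { apply (f_equal fst) in H2 as H2r. apply (f_equal snd) in H2 as H2i.
    simpl in H2r, H2i. apply injective_projections; simpl; lra. }
  apply Cmult_eq0_r in E1; [|exact Hc].
  assert (Hp : p = k ^ 2 + a1 * k) by (apply (f_equal fst) in E1; simpl in E1; lra).
  assert (Hq : q = 0) by (apply (f_equal snd) in E1; simpl in E1; lra).
  subst p q.
  assert (E2 : (RtoC (a2 - 2 * k ^ 3 - a1 * k ^ 2) * (u, v))%C = 0%C).
  { apply (f_equal fst) in H3 as H3r. apply (f_equal snd) in H3 as H3i.
    simpl in H3r, H3i. apply injective_projections; simpl; lra. }
  apply Cmult_eq0_r, (f_equal fst) in E2; [|exact Hc]. simpl in E2.
  split; [reflexivity | lra].
Qed.

Lemma eigenvalue_root_condition a a1 a2 lam : 0 < lam ->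
  is_eigenvalue_H a a1 a2 lam -> root_condition a a1 a2 (qrt lam).
Proof.
  intros Hlam [ur [ui [bv [Hder [Hbnd [Hint [Hode [Hbc2 [Hbc3 [x1 [Hx1 Hnz]]]]]]]]]]].
  set (k := qrt lam). assert (Hk : 0 < k) by apply qrt_pos, Hlam.
  set (I j x := Derive_n ur j x ^ 2 + Derive_n ui j x ^ 2).
  set (h x := I 0%nat x + (I 1%nat x + (I 2%nat x + I 3%nat x))).
  assert (Hh : ex_RInt_gen h (at_right 0) (Rbar_locally p_infty)).
  { unfold h.
    apply ex_RInt_gen_plus; [apply Hint; lia|].
    apply ex_RInt_gen_plus; [apply Hint; lia|].
    apply ex_RInt_gen_plus; apply Hint; lia. }
  assert (Hdom : forall j x, (j <= 3)%nat ->
    Derive_n ur j x ^ 2 <= h x /\ Derive_n ui j x ^ 2 <= h x).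
  { intros j x Hj. unfold h, I.
    pose proof (pow2_ge_0 (Derive_n ur 0 x)). pose proof (pow2_ge_0 (Derive_n ui 0 x)).
    pose proof (pow2_ge_0 (Derive_n ur 1 x)). pose proof (pow2_ge_0 (Derive_n ui 1 x)).
    pose proof (pow2_ge_0 (Derive_n ur 2 x)). pose proof (pow2_ge_0 (Derive_n ui 2 x)).
    pose proof (pow2_ge_0 (Derive_n ur 3 x)). pose proof (pow2_ge_0 (Derive_n ui 3 x)).
    destruct j as [|[|[|[|j]]]]; [..| lia]; split; lra. }
  assert (Hderiv : forall u, (forall j x, (j <= 4)%nat -> 0 < x -> ex_derive_n u j x) ->
    forall j x, (j <= 3)%nat -> 0 < x -> is_derive (Derive_n u j) x (Derive_n u (S j) x)).
  { intros u Hu j x Hj Hx. apply Derive_correct, (Hu (S j)); [lia | exact Hx]. }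
  destruct (decaying_exponential (Derive_n ur) k h Hk) as [cr Hr].
  { apply Hderiv. intros j x Hj Hx. apply Hder; assumption. }
  { intros x Hx. rewrite (proj1 (Hode x Hx)). unfold k. rewrite qrt_pow4; auto. }
  { exact Hh. }
  { intros j x Hj _. apply Hdom, Hj. }
  destruct (decaying_exponential (Derive_n ui) k h Hk) as [ci Hi].
  { apply Hderiv. intros j x Hj Hx. apply Hder; assumption. }
  { intros x Hx. rewrite (proj2 (Hode x Hx)). unfold k. rewrite qrt_pow4; auto. }
  { exact Hh. }
  { intros j x Hj _. apply Hdom, Hj. }
  apply (boundary_conditions_root a a1 a2 k (cr, ci) bv); try assumption.
  - intros Hc. injection Hc as -> ->.
    destruct Hnz as [Hnz | Hnz]; apply Hnz.
    + change (Derive_n ur 0 x1 = 0). rewrite (Hr 0%nat) by (lia || exact Hx1). ring.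
    + change (Derive_n ui 0 x1 = 0). rewrite (Hi 0%nat) by (lia || exact Hx1). ring.
  - intros j Hj. destruct (Hbnd j Hj) as [Hbr Hbi].
    apply (limit_at_right_exp _ (cr * (- k) ^ j) k) in Hbr; [|exact (fun x => Hr j x Hj)].
    apply (limit_at_right_exp _ (ci * (- k) ^ j) k) in Hbi; [|exact (fun x => Hi j x Hj)].
    destruct (bv j) as [br bi]. simpl in Hbr, Hbi. subst br bi.
    apply injective_projections; simpl; ring.
Qed.

Lemma root_condition_eigenvalue a a1 a2 lam : 0 < lam ->
  root_condition a a1 a2 (qrt lam) -> is_eigenvalue_H a a1 a2 lam.
Proof.
  intros Hlam Hroot. set (k := qrt lam) in *. assert (Hk : 0 < k) by apply qrt_pos, Hlam.
  exists (fun x => exp (- k * x)), (fun _ => 0), (fun j => RtoC ((- k) ^ j)).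
  split; [|split; [|split; [|split; [|split; [|split]]]]].
  - intros j x Hj Hx. split; [|exact (Ck_const 4 0 j x Hj Hx)].
    destruct j as [|j]; [exact I|].
    apply ex_derive_ext with (fun y => (- k) ^ j * exp (- k * y)).
    + intros t. symmetry. apply Derive_n_exp_decay.
    + auto_derive. exact I.
  - intros j Hj. split.
    + apply filterlim_ext with (fun y => (- k) ^ j * exp (- k * y)).
      * intros t. symmetry. apply Derive_n_exp_decay.
      * eapply filterlim_filter_le_1; [apply filter_le_within|].
        replace (Re (RtoC ((- k) ^ j))) with ((- k) ^ j * exp (- k * 0))
          by (simpl; rewrite Rmult_0_r, exp_0; ring).
        apply (ex_derive_continuous (fun y => (- k) ^ j * exp (- k * y))). auto_derive. exact I.
    + apply filterlim_ext with (fun _ => 0).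
      * intros t. symmetry. apply Derive_n_zero.
      * apply filterlim_const.
  - intros j Hj.
    assert (E : forall x, ((- k) ^ j) ^ 2 * exp (- (2 * k) * x) =
      Derive_n (fun y => exp (- k * y)) j x ^ 2 + Derive_n (fun _ => 0) j x ^ 2).
    { intros x. rewrite Derive_n_exp_decay, Derive_n_zero.
      replace (- (2 * k) * x) with (- k * x + - k * x) by ring. rewrite exp_plus. ring. }
    apply (ex_RInt_gen_ext_eq _ _ E), ex_RInt_gen_exp_decay. lra.
  - intros x Hx. rewrite Derive_n_exp_decay, Derive_n_zero.
    rewrite <- (qrt_pow4 lam Hlam). fold k. split; ring.
  - destruct Hroot as [-> _]. apply injective_projections; simpl; ring.
  - destruct Hroot as [-> ->]. apply injective_projections; simpl; ring.
  - exists 1. split; [lra|]. left. apply Rgt_not_eq, exp_pos.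
Qed.

Definition s_b_extension (a : C) (a1 a2 : R) (S B : R -> C) : Prop :=
  (forall lam : R, 0 < lam -> Omega a a1 a2 (RtoC (qrt lam)) <> RtoC 0 ->
      S lam = s_fun a a1 a2 lam /\ B lam = b_fun a a1 a2 lam) /\
  smooth_pos S /\ smooth_pos B /\
  (forall lam0 : R, 0 < lam0 -> is_eigenvalue_H a a1 a2 lam0 ->
      S lam0 = ((a + Ci * RtoC (sqrt lam0)) / (a - Ci * RtoC (sqrt lam0)))%C /\
      B lam0 = (- (RtoC 2 * RtoC (sqrt lam0)) / (a - Ci * RtoC (sqrt lam0)))%C).

Lemma quotient_extension a a1 a2 (Q M : R -> C) :
  smooth_pos (fun lam => Q (qrt lam)) -> smooth_pos (fun lam => M (qrt lam)) ->
  (forall k, 0 < k -> Q k <> 0%C) ->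
  (forall k, 0 < k -> Omega a a1 a2 (RtoC k) <> 0%C -> exists c, c <> 0 /\
     Omega a a1 a2 (RtoC k) = (RtoC c * Q k)%C /\ b_numer a a1 a2 (RtoC k) = (RtoC c * M k)%C) ->
  (forall lam, 0 < lam -> Omega a a1 a2 (RtoC (qrt lam)) <> 0%C ->
     (Cconj (Q (qrt lam)) / Q (qrt lam))%C = s_fun a a1 a2 lam /\
     (M (qrt lam) / Q (qrt lam))%C = b_fun a a1 a2 lam) /\
  smooth_pos (fun lam => Cconj (Q (qrt lam)) / Q (qrt lam))%C /\
  smooth_pos (fun lam => M (qrt lam) / Q (qrt lam))%C.
Proof.
  intros HQ HM HQnz Hfactor.
  assert (HQnz' : forall lam, 0 < lam -> Q (qrt lam) <> 0%C) by (intros; apply HQnz, qrt_pos; assumption).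
  split; [|split; apply smooth_pos_div; try apply smooth_pos_conj; assumption].
  intros lam Hlam HO.
  destruct (Hfactor (qrt lam) (qrt_pos lam Hlam) HO) as [c [Hc [HOc HNc]]].
  unfold s_fun, b_fun. fold (b_numer a a1 a2 (RtoC (qrt lam))). rewrite HOc, HNc.
  rewrite Cconj_div_scal, Cdiv_scal by auto. split; reflexivity.
Qed.

Lemma s_b_extension_at_root p q a1 a2 k0 : 0 < k0 -> root_condition (p, q) a1 a2 k0 ->
  exists S B, s_b_extension (p, q) a1 a2 S B.
Proof.
  intros Hk0 Hroot.
  destruct (quotient_extension (p, q) a1 a2 (Omega_quot a1 k0) (fun k => RtoC (b_numer_quot k0 k)))
    as [Hagree [HS HB]].
  - apply smooth_pos_intro; unfold Omega_quot; cbn [Re Im fst snd]; smooth_poly.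
  - apply smooth_pos_intro; unfold b_numer_quot; cbn [Re Im fst snd RtoC]; smooth_poly.
  - intros k Hk. apply (Omega_quot_neq0 (p, q) a1 a2); assumption.
  - intros k Hk HO. exists (k - k0). split.
    + intros E. apply HO. rewrite (Omega_factor _ _ _ _ _ Hroot), E. apply Cmult_0_l.
    + split; [apply Omega_factor | apply b_numer_factor]; exact Hroot.
  - exists (fun lam => Cconj (Omega_quot a1 k0 (qrt lam)) / Omega_quot a1 k0 (qrt lam))%C,
      (fun lam => RtoC (b_numer_quot k0 (qrt lam)) / Omega_quot a1 k0 (qrt lam))%C.
    split; [exact Hagree | split; [exact HS | split; [exact HB|]]].
    intros lam0 Hlam0 Heig.
    assert (Hk : qrt lam0 = k0).
    { apply (root_condition_unique (p, q) a1 a2); try assumption.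
      - apply qrt_pos, Hlam0.
      - apply eigenvalue_root_condition; assumption. }
    rewrite <- (qrt_sqr lam0 Hlam0), Hk. replace (k0 * k0) with (k0 ^ 2) by ring.
    exact (quotients_at_root (p, q) a1 a2 k0 Hk0 Hroot).
Qed.

Lemma s_b_extension_no_root p q a1 a2 :
  ~ (exists k0, 0 < k0 /\ root_condition (p, q) a1 a2 k0) ->
  exists S B, s_b_extension (p, q) a1 a2 S B.
Proof.
  intros Hnone.
  assert (HOnz : forall k, 0 < k -> Omega (p, q) a1 a2 (RtoC k) <> 0%C).
  { intros k Hk HO. apply Hnone. exists k. split; [exact Hk|]. apply Omega_eq0_iff; assumption. }
  destruct (quotient_extension (p, q) a1 a2 (fun k => Omega (p, q) a1 a2 (RtoC k))
              (fun k => b_numer (p, q) a1 a2 (RtoC k))) as [Hagree [HS HB]].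
  - apply (smooth_pos_ext (fun lam => (a1 * a2 - (p ^ 2 + q ^ 2) + a2 * qrt lam
        - a1 * qrt lam ^ 3 - qrt lam ^ 4, - a2 * qrt lam + 2 * p * qrt lam ^ 2 - a1 * qrt lam ^ 3))).
    + intros lam _. symmetry. apply Omega_RtoC.
    + apply smooth_pos_intro; cbn [Re Im fst snd]; smooth_poly.
  - apply (smooth_pos_ext (fun lam => (a1 * a2 - (p ^ 2 + q ^ 2) + qrt lam ^ 4, 2 * q * qrt lam ^ 2))).
    + intros lam _. symmetry. apply b_numer_RtoC.
    + apply smooth_pos_intro; cbn [Re Im fst snd]; smooth_poly.
  - exact HOnz.
  - intros k _ _. exists 1. split; [exact R1_neq_R0 | split; symmetry; apply Cmult_1_l].
  - exists (fun lam => Cconj (Omega (p, q) a1 a2 (RtoC (qrt lam))) / Omega (p, q) a1 a2 (RtoC (qrt lam)))%C,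
      (fun lam => b_numer (p, q) a1 a2 (RtoC (qrt lam)) / Omega (p, q) a1 a2 (RtoC (qrt lam)))%C.
    split; [exact Hagree | split; [exact HS | split; [exact HB|]]].
    intros lam0 Hlam0 Heig. exfalso. apply Hnone. exists (qrt lam0).
    split; [apply qrt_pos, Hlam0 | apply eigenvalue_root_condition; assumption].
Qed.

Theorem proposition5p10 (a : C) (a1 a2 : R) :
  (forall lam : R, 0 < lam -> ~ is_eigenvalue_H a a1 a2 lam ->
      Omega a a1 a2 (RtoC (qrt lam)) <> RtoC 0) /\
  exists S B : R -> C,
    (forall lam : R, 0 < lam -> Omega a a1 a2 (RtoC (qrt lam)) <> RtoC 0 ->
        S lam = s_fun a a1 a2 lam /\ B lam = b_fun a a1 a2 lam) /\
    smooth_pos S /\ smooth_pos B /\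
    (forall lam0 : R, 0 < lam0 -> is_eigenvalue_H a a1 a2 lam0 ->
        S lam0 = ((a + Ci * RtoC (sqrt lam0)) / (a - Ci * RtoC (sqrt lam0)))%C /\
        B lam0 = (- (RtoC 2 * RtoC (sqrt lam0)) / (a - Ci * RtoC (sqrt lam0)))%C).
Proof.
  destruct a as [p q]. split.
  - intros lam Hlam Hnot HO. apply Hnot, root_condition_eigenvalue; [exact Hlam|].
    apply Omega_eq0_iff; [apply qrt_pos, Hlam | exact HO].
  - destruct (classic (exists k0, 0 < k0 /\ root_condition (p, q) a1 a2 k0))
      as [[k0 [Hk0 Hroot]] | Hnone].
    + exact (s_b_extension_at_root p q a1 a2 k0 Hk0 Hroot).
    + exact (s_b_extension_no_root p q a1 a2 Hnone).
Qed.
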